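(* Let $\mathcal H$ be a finite-dimensional Hilbert space, $U(t,s)$ a unitary evolution, $|\psi\rangle$ an initial pure state at time $t_0$, and for times $t_0<t_1<\dots<t_n$ let $\hat\sigma^{(k)}=\{|\phi^{(k)}_i\rangle\langle\phi^{(k)}_i|\}_i$, $k=1,\dots,n$, be sets of rank-1 projectors onto orthonormal bases of $\mathcal H$ (Schrödinger picture), with $|\phi^{(0)}\rangle:=|\psi\rangle$. Form the graph whose vertices at time $t_k$ are the basis vectors $|\phi^{(k)}_i\rangle$, with an edge between $|\phi^{(k)}_j\rangle$ and $|\phi^{(k+1)}_i\rangle$ iff the Green function $G^{ij}(t_{k+1},t_k)=\langle\phi^{(k+1)}_i|U(t_{k+1},t_k)|\phi^{(k)}_j\rangle$ is nonzero. A loop is the closed walk formed by two distinct forward-in-time paths $\alpha=(\alpha_1,\dots,\alpha_n)$, $\beta=(\beta_1,\dots,\beta_n)$ from $|\psi\rangle$ to the same final vertex ($\alpha_n=\beta_n$), and its product of Green functions is $\prod_{k=0}^{n-1}G^{\alpha_{k+1}\alpha_k}(t_{k+1},t_k)\cdot\prod_{k=0}^{n-1}\overline{G^{\beta_{k+1}\beta_k}(t_{k+1},t_k)}$ (with $\alpha_0=\beta_0$ the initial vertex; traversing an edge backward contributes the complex conjugate). If the product of Green functions around every loop is purely imaginary (zero counting as purely imaginary, so in particular the absence of loops suffices), then the family of fine-grained histories $\{|\psi\rangle\langle\psi|,\sigma^{(1)},\dots,\sigma^{(n)}\}$ is weakly consistent.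
   Context: Here $\sigma^{(k)}$ denotes the Heisenberg-picture version of $\hat\sigma^{(k)}$, i.e. the projectors $P^{(k)}_i=U(t_k,t_0)^\dagger|\phi^{(k)}_i\rangle\langle\phi^{(k)}_i|U(t_k,t_0)$. For a history $\alpha=(\alpha_1,\dots,\alpha_n)$ the history operator is $C_\alpha=P^{(1)}_{\alpha_1}\cdots P^{(n)}_{\alpha_n}$, its probability is $Pr(\alpha)=\mathrm{Tr}\{C_\alpha^\dagger\rho C_\alpha\}$ and the coherence function is $D(\alpha;\beta)=\mathrm{Tr}\{C_\alpha^\dagger\rho C_\beta\}$, with $\rho=|\psi\rangle\langle\psi|$. The family is weakly consistent if $\mathrm{Re}\,D(\alpha;\beta)=\delta_{\alpha\beta}Pr(\alpha)$ for all histories $\alpha,\beta$, where $\delta_{\alpha\beta}=\prod_k\delta_{\alpha_k\beta_k}$. *)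

(* Finite-dimensional Hilbert space = 'cV[R[i]]_d over the
   complex numbers R[i] of an arbitrary real closed field R (times live in R). *)
From HB Require Import structures.
From mathcomp Require Import all_boot all_order all_algebra.
From mathcomp Require Import complex.
Set Implicit Arguments. Unset Strict Implicit. Unset Printing Implicit Defensive.
Import Order.TTheory GRing.Theory Num.Theory.
Local Open Scope ring_scope.

Section QDefs.
Variable R : rcfType.
Local Notation C := R[i].

Definition adjmx (m n : nat) (A : 'M[C]_(m, n)) : 'M[C]_(n, m) :=
  (map_mx (fun z => z^*) A)^T.

Definition inner (d : nat) (u v : 'cV[C]_d) : C := (adjmx u *m v) 0 0.

Definition unitary_mx (d : nat) (A : 'M[C]_d) : Prop :=
  adjmx A *m A = 1%:M.

Definition unitary_evolution (d : nat) (U : R -> R -> 'M[C]_d) : Prop :=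
  (forall t s, unitary_mx (U t s)) /\
  (forall t, U t t = 1%:M) /\
  (forall t r s, U t s = U t r *m U r s).

Definition orthonormal_basis (d : nat) (e : 'I_d -> 'cV[C]_d) : Prop :=
  forall i j, inner (e i) (e j) = (i == j)%:R.

Definition rank1 (d : nat) (v : 'cV[C]_d) : 'M[C]_d := v *m adjmx v.

Variables (d n : nat) (U : R -> R -> 'M[C]_d) (t : 'I_n.+1 -> R)
  (psi : 'cV[C]_d) (phi : 'I_n -> 'I_d -> 'cV[C]_d).
(* phi k is the basis at time t_(k+1), k : 'I_n. *)

(* Heisenberg-picture projector P^(k+1)_i = U(t_{k+1},t_0)^† |phi><phi| U(t_{k+1},t_0) *)
Definition heis_proj (k : 'I_n) (i : 'I_d) : 'M[C]_d :=
  adjmx (U (t (lift ord0 k)) (t ord0)) *m rank1 (phi k i)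
        *m U (t (lift ord0 k)) (t ord0).

Definition history := {ffun 'I_n -> 'I_d}.

Definition history_op (a : history) : 'M[C]_d :=
  foldr (fun k M => heis_proj k (a k) *m M) 1%:M (enum 'I_n).

Definition rho : 'M[C]_d := rank1 psi.

Definition coherence (a b : history) : C :=
  \tr (adjmx (history_op a) *m rho *m history_op b).

Definition prob (a : history) : C := coherence a a.

Definition weakly_consistent : Prop :=
  forall a b : history, 'Re (coherence a b) = (a == b)%:R * prob a.

Definition vertex (a : history) (k : 'I_n.+1) : 'cV[C]_d :=
  match unlift ord0 k with
  | None => psi
  | Some k' => phi k' (a k')
  end.

Definition green (a : history) (k : 'I_n) : C :=
  inner (vertex a (lift ord0 k))
        (U (t (lift ord0 k)) (t (widen_ord (leqnSn n) k)) *m vertex a (widen_ord (leqnSn n) k)).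

Definition is_path (a : history) : Prop := forall k, green a k != 0.

Definition same_end (a b : history) : Prop :=
  forall k : 'I_n, k.+1 = n -> a k = b k.

Definition loop_product (a b : history) : C :=
  (\prod_(k < n) green a k) * (\prod_(k < n) green b k)^*.

Definition purely_imaginary (z : C) : Prop := 'Re z = 0.

End QDefs.

(* Put W_k = U(t_k, t_0). The Heisenberg projector at time t_k is
   W_k^† |φ_k><φ_k| W_k, and unitarity with the composition law gives
   W_{k+1} W_k^† = U(t_{k+1}, t_k). Pushing the bra <ψ| through the history
   operator therefore telescopes into <ψ| C_α = (∏_k G_α,k)^* <φ_{α_n}| W_n, so
   D(α;β) = ∏_k G_α,k · (∏_k G_β,k)^* · <φ_{β_n}|φ_{α_n}>. This vanishes unless
   α and β end at the same vertex, is |∏_k G_α,k|^2 when α = β, and otherwise is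
   the product around a loop (or 0 if one of α, β uses a vanishing edge), whose
   real part is 0 by hypothesis. *)

From Pilot Require Import Defs.
From HB Require Import structures.
From mathcomp Require Import all_boot all_order all_algebra.
From mathcomp Require Import complex.
Import Order.TTheory GRing.Theory Num.Theory.
Local Open Scope ring_scope.

Section Adjoint.
Variable R : rcfType.
Local Notation C := R[i].

Lemma adjmxM m n p (A : 'M[C]_(m, n)) (B : 'M[C]_(n, p)) :
  adjmx (A *m B) = adjmx B *m adjmx A.
Proof. by rewrite /adjmx map_mxM trmx_mul. Qed.

Lemma adjmxK m n (A : 'M[C]_(m, n)) : adjmx (adjmx A) = A.
Proof. by apply/matrixP => i j; rewrite /adjmx !mxE conjCK. Qed.

Lemma adjmxZ m n (c : C) (A : 'M[C]_(m, n)) : adjmx (c *: A) = c^* *: adjmx A.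
Proof. by apply/matrixP => i j; rewrite /adjmx !mxE rmorphM. Qed.

Lemma conjC_inner d (u v : 'cV[C]_d) : (inner u v)^* = inner v u.
Proof.
by rewrite /inner -[adjmx v *m u]adjmxK adjmxM adjmxK /adjmx !mxE.
Qed.

Lemma innerZl d (c : C) (u v : 'cV[C]_d) : inner (c *: u) v = c^* * inner u v.
Proof. by rewrite /inner adjmxZ -scalemxAl mxE. Qed.

Lemma innerZr d (c : C) (u v : 'cV[C]_d) : inner u (c *: v) = c * inner u v.
Proof. by rewrite /inner -scalemxAr mxE. Qed.

Lemma mulmx_adj_unitary d (W : 'M[C]_d) : unitary_mx W -> W *m adjmx W = 1%:M.
Proof. exact: mulmx1C. Qed.

Lemma inner_adjmx_unitary d (W : 'M[C]_d) (u v : 'cV[C]_d) :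
  unitary_mx W -> inner (adjmx W *m u) (adjmx W *m v) = inner u v.
Proof.
move/mulmx_adj_unitary=> WWV.
by rewrite /inner adjmxM adjmxK mulmxA -[_ *m W *m _]mulmxA WWV mulmx1.
Qed.

Lemma mxtrace_rank1_sandwich d (A B : 'M[C]_d) (x : 'cV[C]_d) :
  \tr (adjmx A *m rank1 x *m B) = inner (adjmx B *m x) (adjmx A *m x).
Proof.
rewrite /rank1 /inner mulmxA -[_ *m adjmx x *m B]mulmxA mxtrace_mulC trace_mx11.
by rewrite adjmxM adjmxK !mulmxA.
Qed.

End Adjoint.

Section RankOneChain.
Context {R : rcfType} {d : nat}.
Variables (v : nat -> 'cV[R[i]]_d) (W : nat -> 'M[R[i]]_d).

Definition chain_proj k := adjmx (W k) *m rank1 (v k) *m W k.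

Definition chain_amp k := inner (v k.+1) (W k.+1 *m adjmx (W k) *m v k).

Lemma chain_bra_proj k :
  adjmx (v k) *m W k *m chain_proj k.+1 =
  (chain_amp k)^* *: (adjmx (v k.+1) *m W k.+1).
Proof.
rewrite /chain_proj /rank1 !mulmxA.
set x := _ *m v k.+1; rewrite [x]mx11_scalar mul_scalar_mx -scalemxAl.
by rewrite /chain_amp conjC_inner /inner !adjmxM adjmxK !mulmxA.
Qed.

Lemma chain_bra_projs j m :
  adjmx (v j) *m W j *m foldr (fun k M => chain_proj k *m M) 1%:M (iota j.+1 m) =
  (\prod_(k < m) chain_amp (j + k)%N)^* *: (adjmx (v (j + m)%N) *m W (j + m)%N).
Proof.
elim: m j => [|m IHm] j /=; first by rewrite big_ord0 conjC1 scale1r mulmx1 addn0.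
rewrite mulmxA chain_bra_proj -scalemxAl IHm scalerA big_ord_recl rmorphM addn0 addSnnS.
by under [in RHS]eq_bigr => k _ do rewrite lift0 -addSnnS.
Qed.

End RankOneChain.

Lemma lift0_eq_max n (k : 'I_n) : (lift ord0 k == ord_max) = (k.+1 == n).
Proof. by rewrite -val_eqE. Qed.

Lemma lift0_inord n (k : 'I_n) : lift ord0 k = inord k.+1.
Proof. by apply: val_inj; rewrite /= inordK ?ltnS. Qed.

Lemma widen_inord n (k : 'I_n) : widen_ord (leqnSn n) k = inord k.
Proof. by apply: val_inj; rewrite /= inordK // ltnS ltnW. Qed.

Section Histories.
Context {R : rcfType} {d n : nat} {U : R -> R -> 'M[R[i]]_d} {t : 'I_n.+1 -> R}
  {psi : 'cV[R[i]]_d} {phi : 'I_n -> 'I_d -> 'cV[R[i]]_d}.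

Local Notation history := (history d n).
Local Notation vertex := (vertex psi phi).
Local Notation green := (green U t psi phi).
Local Notation loop_product := (loop_product U t psi phi).

Definition same_endb (a b : history) :=
  [forall k : 'I_n, (k.+1 == n) ==> (a k == b k)].

Lemma same_endP a b : reflect (same_end a b) (same_endb a b).
Proof.
apply: (iffP forallP) => [same k kn | same k]; first exact/eqP/(implyP (same k))/eqP.
by apply/implyP => /eqP kn; apply/eqP/same.
Qed.

Lemma same_end_last_vertex a b : same_end a b -> vertex a ord_max = vertex b ord_max.
Proof.
rewrite /Defs.vertex; case: unliftP => // k /eqP; rewrite eq_sym lift0_eq_max.
by move=> /eqP kn same; rewrite same.
Qed.

Lemma Re_loop_product_diag a : 'Re (loop_product a a) = loop_product a a.
Proof. by apply/Creal_ReP; rewrite /Defs.loop_product -normCK rpredX // normr_real. Qed.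

Section Evolution.
Hypothesis U_evol : unitary_evolution U.

Lemma evolution_mul_adj r s u : U r s *m adjmx (U u s) = U r u.
Proof.
have [U_unitary [_ U_comp]] := U_evol.
by rewrite (U_comp r u s) -mulmxA mulmx_adj_unitary ?mulmx1.
Qed.

Let vertex_at (a : history) k := vertex a (inord k).
Let evol k := U (t (inord k)) (t ord0).

Lemma heis_proj_chain (a : history) (k : 'I_n) :
  heis_proj U t phi k (a k) = chain_proj (vertex_at a) evol k.+1.
Proof. by rewrite /chain_proj /vertex_at /evol -lift0_inord /Defs.vertex liftK. Qed.

Lemma history_op_chain a :
  history_op U t phi a =
  foldr (fun k M => chain_proj (vertex_at a) evol k *m M) 1%:M (iota 1 n).
Proof.
rewrite /history_op (iotaDl 1 0) -val_enum_ord -map_comp foldr_map.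
by elim: (enum 'I_n) => [//|k s /= ->]; rewrite heis_proj_chain.
Qed.

Lemma green_chain (a : history) (k : 'I_n) : green a k = chain_amp (vertex_at a) evol k.
Proof. by rewrite /Defs.green /chain_amp evolution_mul_adj lift0_inord widen_inord. Qed.

Lemma adj_history_op_psi a :
  adjmx (history_op U t phi a) *m psi =
  (\prod_(k < n) green a k) *: (adjmx (U (t ord_max) (t ord0)) *m vertex a ord_max).
Proof.
have inord0 : inord 0%N = ord0 :> 'I_n.+1 := inord_val ord0.
have inord_max : inord n = ord_max :> 'I_n.+1 := inord_val ord_max.
have vertex_at0 : vertex_at a 0%N = psi by rewrite /vertex_at inord0 /Defs.vertex unlift_none.
have evol0 : evol 0%N = 1%:M by rewrite /evol inord0 U_evol.2.1.
have vertex_at_max : vertex_at a n = vertex a ord_max by rewrite /vertex_at inord_max.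
have evol_max : evol n = U (t ord_max) (t ord0) by rewrite /evol inord_max.
have := chain_bra_projs (vertex_at a) evol 0%N n.
rewrite -history_op_chain vertex_at0 evol0 mulmx1 add0n vertex_at_max evol_max => bra_eq.
rewrite -[psi in LHS]adjmxK -adjmxM bra_eq adjmxZ conjCK adjmxM adjmxK.
by congr (_ *: _); apply: eq_bigr => k _; rewrite green_chain.
Qed.

Lemma coherence_loop_product a b :
  coherence U t psi phi a b =
  loop_product a b * inner (vertex b ord_max) (vertex a ord_max).
Proof.
rewrite /coherence /rho mxtrace_rank1_sandwich.
rewrite [X in inner X _]adj_history_op_psi [X in inner _ X]adj_history_op_psi.
rewrite innerZl innerZr inner_adjmx_unitary; last exact: U_evol.1.
by rewrite /Defs.loop_product mulrA [_^* * _]mulrC.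
Qed.

End Evolution.

Lemma Re_loop_product_eq0 a b :
  (forall a b : history, is_path U t psi phi a -> is_path U t psi phi b ->
     a != b -> same_end a b -> purely_imaginary (loop_product a b)) ->
  a != b -> same_end a b -> 'Re (loop_product a b) = 0.
Proof.
move=> loops_imaginary neq_ab same; rewrite /Defs.loop_product.
have [->|/prodf_neq0 path_a] := eqVneq (\prod_(k < n) green a k) 0.
  by rewrite mul0r raddf0.
have [->|/prodf_neq0 path_b] := eqVneq (\prod_(k < n) green b k) 0.
  by rewrite conjC0 mulr0 raddf0.
exact: loops_imaginary (fun k => path_a k isT) (fun k => path_b k isT) neq_ab same.
Qed.

Section Orthonormal.
Hypothesis psi_normed : inner psi psi = 1.
Hypothesis phi_orthonormal : forall k, orthonormal_basis (phi k).

Lemma inner_vertex_diag a k : inner (vertex a k) (vertex a k) = 1.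
Proof. by rewrite /Defs.vertex; case: unlift => [k'|] //; rewrite phi_orthonormal eqxx. Qed.

Lemma last_vertex_orthogonal a b :
  ~ same_end a b -> inner (vertex b ord_max) (vertex a ord_max) = 0.
Proof.
rewrite /Defs.vertex; case: unliftP => [k max_k|max0] diff; last first.
  have n0 : n = 0%N := congr1 val max0.
  exfalso; apply: diff => k; suff: (k < 0)%N by [].
  by rewrite -n0 ltn_ord.
move/eqP: max_k; rewrite eq_sym lift0_eq_max => /eqP kn; rewrite phi_orthonormal.
have [eq_ba|//] := eqVneq (b k) (a k).
exfalso; apply: diff => k' k'n; suff -> : k' = k by [].
by apply/val_inj/succn_inj; rewrite k'n kn.
Qed.

End Orthonormal.
End Histories.

Theorem theorem2 (R : rcfType) (d n : nat) (U : R -> R -> 'M[R[i]]_d)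
  (t : 'I_n.+1 -> R) (psi : 'cV[R[i]]_d) (phi : 'I_n -> 'I_d -> 'cV[R[i]]_d) :
  unitary_evolution U ->
  (forall k l : 'I_n.+1, (k < l)%N -> t k < t l) ->
  inner psi psi = 1 ->
  (forall k : 'I_n, orthonormal_basis (phi k)) ->
  (forall a b : history d n,
      is_path U t psi phi a -> is_path U t psi phi b ->
      a != b -> same_end a b ->
      purely_imaginary (loop_product U t psi phi a b)) ->
  weakly_consistent U t psi phi.
Proof.
move=> U_evol _ psi_normed phi_orthonormal loops_imaginary a b.
rewrite /prob !(coherence_loop_product U_evol) inner_vertex_diag // mulr1.
have [<-|neq_ab] := eqVneq a b.
  by rewrite inner_vertex_diag // mulr1 mul1r Re_loop_product_diag.
rewrite mul0r; have [same|diff] := same_endP a b.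
  rewrite (same_end_last_vertex _ _ same) inner_vertex_diag // mulr1.
  exact: Re_loop_product_eq0.
by rewrite last_vertex_orthogonal // mulr0 raddf0.
Qed.
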